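(* Let $n\ge3$ and $c>0$. Then $\gamma$ is a $C^2$ function on $[0,\infty)$, and for all $x\ge0$: (i) $2x\gamma''(x)+\gamma'(x)\le\frac{3}{n+2}$, with equality if and only if $x=x_0$; (ii) $(\gamma(x)+nc)\,x\,\gamma'(x)\ge 2cx+\gamma(x)^2-nc\,\gamma(x)$, with equality if and only if $x\ge x_0$; (iii) $\gamma(x)>x\gamma'(x)$; (iv) $\gamma(x)=\min\{\alpha(x),\beta(x)\}$; (v) $\frac{x}{n-1}+2c<\gamma(x)<\frac{x}{n-1}+nc$; (vi) $\frac{n-2}{\sqrt{n(n-1)}}\sqrt{x\left(\gamma(x)-\frac1n x\right)}+\gamma(x)\le\frac2n x+nc$.
   Context: Definition of $\gamma$: For $n\ge 3$, $c>0$ and $x\ge 0$ put $\alpha(x)=nc+\frac{n}{2(n-1)}x-\frac{n-2}{2(n-1)}\sqrt{x^2+4(n-1)cx}$, $y_n=4(1-n)+\frac{2(n^2-4)}{\sqrt{2n-5}}\cos\!\left(\frac13\arctan\frac{n^2-4n+6}{2(n-1)\sqrt{2n-5}}\right)$, $x_0=y_nc$, $\beta(x)=\alpha(x_0)+\alpha'(x_0)(x-x_0)+\frac12\alpha''(x_0)(x-x_0)^2$, and $\gamma(x)=\alpha(x)$ for $x\ge x_0$, $\gamma(x)=\beta(x)$ for $0\le x<x_0$. *)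

From Stdlib Require Import Reals Lra.
Open Scope R_scope.

Definition alpha (n : nat) (c x : R) : R :=
  INR n * c + INR n / (2 * (INR n - 1)) * x
  - (INR n - 2) / (2 * (INR n - 1)) * sqrt (x ^ 2 + 4 * (INR n - 1) * c * x).

(* Closed forms of alpha' and alpha'' (valid for x > 0):
   with s(x) = sqrt(x^2+4(n-1)cx), s' = (x+2(n-1)c)/s, s'' = -4(n-1)^2c^2/s^3. *)
Definition alpha1 (n : nat) (c x : R) : R :=
  INR n / (2 * (INR n - 1))
  - (INR n - 2) / (2 * (INR n - 1)) * ((x + 2 * (INR n - 1) * c)
                                       / sqrt (x ^ 2 + 4 * (INR n - 1) * c * x)).

Definition alpha2 (n : nat) (c x : R) : R :=
  2 * (INR n - 2) * (INR n - 1) * c ^ 2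
  / (sqrt (x ^ 2 + 4 * (INR n - 1) * c * x)) ^ 3.

Definition y_n (n : nat) : R :=
  4 * (1 - INR n)
  + 2 * (INR n ^ 2 - 4) / sqrt (2 * INR n - 5)
    * cos (/ 3 * atan ((INR n ^ 2 - 4 * INR n + 6)
                       / (2 * (INR n - 1) * sqrt (2 * INR n - 5)))).

Definition x0 (n : nat) (c : R) : R := y_n n * c.

Definition beta (n : nat) (c x : R) : R :=
  alpha n c (x0 n c) + alpha1 n c (x0 n c) * (x - x0 n c)
  + / 2 * alpha2 n c (x0 n c) * (x - x0 n c) ^ 2.

Definition gamma (n : nat) (c x : R) : R :=
  if Rle_dec (x0 n c) x then alpha n c x else beta n c x.

Definition has_deriv_nonneg (f f' : R -> R) : Prop :=
  forall x, 0 <= x -> forall eps, 0 < eps -> exists delta, 0 < delta /\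
    forall y, 0 <= y -> y <> x -> Rabs (y - x) < delta ->
      Rabs ((f y - f x) / (y - x) - f' x) < eps.

Definition cont_nonneg (f : R -> R) : Prop :=
  forall x, 0 <= x -> forall eps, 0 < eps -> exists delta, 0 < delta /\
    forall y, 0 <= y -> Rabs (y - x) < delta -> Rabs (f y - f x) < eps.

From Stdlib Require Import Reals Lra Psatz.
From Coquelicot Require Import Coquelicot.
Open Scope R_scope.

(* Put u = sqrt(x^2 + 4(n-1)cx) / x > 1, so that c = x(u^2 - 1) / (4(n-1)).  Then
   alpha, alpha' and alpha'' are rational in x and u: alpha satisfies (ii) with
   equality, and (i) for alpha is the sign of a cubic in u which has a single root
   u0 > 1, attained at x = x0 (y_n is Viete's trigonometric root of the associated
   resolvent cubic).  Below x0, gamma is the second order Taylor polynomial beta of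
   alpha at x0.  As alpha'' is decreasing, alpha - beta has the sign of x0 - x, which
   is (iv).  The other claims for beta follow from those for alpha at x0 together with
   explicit factorisations of the defects in (ii) and (vi), of the shapes
   (x - x0)^2 * (positive) and (x - x0)^3 * (negative). *)

Lemma le3_INR n : (3 <= n)%nat -> 3 <= INR n.
Proof. intro h. apply le_INR in h. simpl in h. lra. Qed.

Lemma sqrt_disc_eq N c x u : 0 < x -> 0 < u -> x * (u ^ 2 - 1) = 4 * (N - 1) * c ->
  sqrt (x ^ 2 + 4 * (N - 1) * c * x) = u * x.
Proof.
  intros hx hu H. replace (x ^ 2 + 4 * (N - 1) * c * x) with ((u * x) ^ 2).
  - apply sqrt_pow2. nra.
  - rewrite <- H. ring.
Qed.

Lemma MVT_strict f f' a b : a < b ->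
  (forall t, a < t < b -> derivable_pt_lim f t (f' t)) ->
  (forall t, a <= t <= b -> continuity_pt f t) ->
  exists t, a < t < b /\ f b - f a = f' t * (b - a).
Proof.
  intros hab hd hc.
  assert (pr : forall t, a < t < b -> derivable_pt f t) by (intros t ht; exists (f' t); apply hd, ht).
  destruct (MVT f id a b pr (fun t _ => derivable_pt_id t) hab hc
     (fun t _ => derivable_continuous_pt id t (derivable_pt_id t))) as [t [ht E]].
  exists t. split; [exact ht|].
  rewrite derive_pt_id, (derive_pt_eq_0 f t (f' t) (pr t ht) (hd t ht)) in E.
  unfold id in E. lra.
Qed.

Lemma derivable_pt_lim_slope f x l : derivable_pt_lim f x l ->
  forall eps, 0 < eps -> exists delta, 0 < delta /\
    forall y, y <> x -> Rabs (y - x) < delta -> Rabs ((f y - f x) / (y - x) - l) < eps.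
Proof.
  intros H eps heps. destruct (H eps heps) as [d Hd]. exists d. split; [apply cond_pos|].
  intros y hy hyd. replace y with (x + (y - x)) at 1 by ring. apply Hd; [lra|exact hyd].
Qed.

Lemma continuity_pt_ball f x : continuity_pt f x ->
  forall eps, 0 < eps -> exists delta, 0 < delta /\
    forall y, Rabs (y - x) < delta -> Rabs (f y - f x) < eps.
Proof.
  intros H eps heps. destruct (H eps heps) as [d [hd Hd]]. exists d. split; [exact hd|].
  intros y hy. destruct (Req_dec y x) as [->|hne].
  - rewrite Rminus_diag, Rabs_R0. exact heps.
  - apply Hd. split; [split; [exact I|auto]|exact hy].
Qed.

Lemma glue_has_deriv (f1 f2 d1 d2 : R -> R) (a : R) :
  f1 a = f2 a -> d1 a = d2 a ->
  (forall x, x <= a -> derivable_pt_lim f1 x (d1 x)) ->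
  (forall x, a <= x -> derivable_pt_lim f2 x (d2 x)) ->
  has_deriv_nonneg (fun x => if Rle_dec a x then f2 x else f1 x)
                   (fun x => if Rle_dec a x then d2 x else d1 x).
Proof.
  intros hf hd Hd1 Hd2 x _ eps heps.
  destruct (Rtotal_order x a) as [h|[<-|h]].
  - destruct (derivable_pt_lim_slope f1 x (d1 x) (Hd1 x ltac:(lra)) eps heps) as [d [hd0 H]].
    exists (Rmin d (a - x)). split; [apply Rmin_glb_lt; lra|].
    intros y _ hyx hyd. pose proof (Rmin_l d (a - x)). pose proof (Rmin_r d (a - x)).
    apply Rabs_def2 in hyd as hy.
    destruct (Rle_dec a y), (Rle_dec a x); try lra.
    apply H; [exact hyx|lra].
  - destruct (derivable_pt_lim_slope f1 x (d1 x) (Hd1 x ltac:(lra)) eps heps) as [d [hd1 H1]].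
    destruct (derivable_pt_lim_slope f2 x (d2 x) (Hd2 x ltac:(lra)) eps heps) as [d' [hd2 H2]].
    exists (Rmin d d'). split; [apply Rmin_glb_lt; lra|].
    intros y _ hyx hyd. pose proof (Rmin_l d d'). pose proof (Rmin_r d d').
    destruct (Rle_dec x x) as [_|]; [|lra]. destruct (Rle_dec x y).
    + apply H2; [exact hyx|lra].
    + rewrite <- hf, <- hd. apply H1; [exact hyx|lra].
  - destruct (derivable_pt_lim_slope f2 x (d2 x) (Hd2 x ltac:(lra)) eps heps) as [d [hd0 H]].
    exists (Rmin d (x - a)). split; [apply Rmin_glb_lt; lra|].
    intros y _ hyx hyd. pose proof (Rmin_l d (x - a)). pose proof (Rmin_r d (x - a)).
    apply Rabs_def2 in hyd as hy.
    destruct (Rle_dec a y), (Rle_dec a x); try lra.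
    apply H; [exact hyx|lra].
Qed.

Lemma glue_continuous (f1 f2 : R -> R) (a : R) :
  f1 a = f2 a ->
  (forall x, x <= a -> continuity_pt f1 x) ->
  (forall x, a <= x -> continuity_pt f2 x) ->
  cont_nonneg (fun x => if Rle_dec a x then f2 x else f1 x).
Proof.
  intros hf Hc1 Hc2 x _ eps heps.
  destruct (Rtotal_order x a) as [h|[<-|h]].
  - destruct (continuity_pt_ball f1 x (Hc1 x ltac:(lra)) eps heps) as [d [hd H]].
    exists (Rmin d (a - x)). split; [apply Rmin_glb_lt; lra|].
    intros y _ hyd. pose proof (Rmin_l d (a - x)). pose proof (Rmin_r d (a - x)).
    apply Rabs_def2 in hyd as hy.
    destruct (Rle_dec a y), (Rle_dec a x); try lra.
    apply H. lra.
  - destruct (continuity_pt_ball f1 x (Hc1 x ltac:(lra)) eps heps) as [d [hd1 H1]].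
    destruct (continuity_pt_ball f2 x (Hc2 x ltac:(lra)) eps heps) as [d' [hd2 H2]].
    exists (Rmin d d'). split; [apply Rmin_glb_lt; lra|].
    intros y _ hyd. pose proof (Rmin_l d d'). pose proof (Rmin_r d d').
    destruct (Rle_dec x x) as [_|]; [|lra]. destruct (Rle_dec x y).
    + apply H2. lra.
    + rewrite <- hf. apply H1. lra.
  - destruct (continuity_pt_ball f2 x (Hc2 x ltac:(lra)) eps heps) as [d [hd H]].
    exists (Rmin d (x - a)). split; [apply Rmin_glb_lt; lra|].
    intros y _ hyd. pose proof (Rmin_l d (x - a)). pose proof (Rmin_r d (x - a)).
    apply Rabs_def2 in hyd as hy.
    destruct (Rle_dec a y), (Rle_dec a x); try lra.
    apply H. lra.
Qed.

Lemma div_sqrt_mul_sqrt_lt k p w r : 0 <= k -> 0 < p -> 0 <= w -> 0 <= r ->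
  k ^ 2 / p * w < r ^ 2 -> k / sqrt p * sqrt w < r.
Proof.
  intros hk hp hw hr H.
  assert (hq : 0 < sqrt p) by (apply sqrt_lt_R0, hp).
  assert (hq2 := sqrt_sqrt p ltac:(lra)). assert (hw2 := sqrt_sqrt w hw).
  set (A := k / sqrt p * sqrt w).
  assert (hA : 0 <= A).
  { apply Rmult_le_pos; [apply Rmult_le_pos; [lra|apply Rlt_le, Rinv_0_lt_compat, hq]|].
    apply sqrt_pos. }
  assert (A * A = k ^ 2 / p * w).
  { replace (A * A) with (k ^ 2 * (sqrt w * sqrt w) / (sqrt p * sqrt p)) by (unfold A; field; lra).
    rewrite hq2, hw2. field. lra. }
  nra.
Qed.

(* For alpha, inequality (i) at x > 0 reads [cubic_u (INR n) u <= 0]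
   with u = sqrt(x^2 + 4(n-1)cx) / x > 1. *)
Definition cubic_u (N u : R) : R :=
  2 * (N ^ 2 - 4 * N + 6) * u ^ 3 - 3 * (N ^ 2 - 4) * u ^ 2 + (N ^ 2 - 4).

Lemma cubic_u_nonpos N u u0 : 3 <= N -> 1 < u -> u <= u0 -> cubic_u N u0 = 0 ->
  cubic_u N u <= 0 /\ (cubic_u N u = 0 -> u = u0).
Proof.
  intros hN hu huu0 hp. unfold cubic_u in *.
  set (a := 2 * (N ^ 2 - 4 * N + 6)) in *. set (b := N ^ 2 - 4) in *.
  assert (hab : b <= a) by (unfold a, b; pose proof (pow2_ge_0 (N - 4)); nra).
  assert (hb : 0 < b) by (unfold b; nra).
  (* cubic_u N 1 = 20 - 8 N < 0 makes the quadratic cofactor positive at 1, hence on [1, u0] *)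
  set (q1 := a * (1 + u0 + u0 ^ 2) - 3 * b * (1 + u0)).
  assert (hq1 : 0 < q1).
  { assert (E : (1 - u0) * q1 = (20 - 8 * N) - (a * u0 ^ 3 - 3 * b * u0 ^ 2 + b))
      by (unfold q1, a, b; ring).
    rewrite hp in E. nra. }
  set (q := a * (u ^ 2 + u * u0 + u0 ^ 2) - 3 * b * (u + u0)).
  assert (hq : 0 < q).
  { assert (E : q - q1 = (u - 1) * (a * (u + 1 + u0) - 3 * b)) by (unfold q, q1; ring).
    assert (0 < a * (u + 1 + u0) - 3 * b) by nra. nra. }
  assert (E : a * u ^ 3 - 3 * b * u ^ 2 + b = (u - u0) * q + (a * u0 ^ 3 - 3 * b * u0 ^ 2 + b))
    by (unfold q; ring).
  rewrite hp, Rplus_0_r in E. rewrite E. split; [nra|].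
  intro h. destruct (Rmult_integral _ _ h); lra.
Qed.

Section Alpha.

Variables (n : nat) (c : R).
Hypotheses (hN : 3 <= INR n) (hc : 0 < c).

Lemma disc_pos x : 0 < x -> 0 < x ^ 2 + 4 * (INR n - 1) * c * x.
Proof.
  intro hx. assert (0 < (INR n - 1) * c * x) by (apply Rmult_lt_0_compat; nra). nra.
Qed.

Lemma sqrt_disc_param x : 0 < x -> exists u, 1 < u /\
  c = x * (u ^ 2 - 1) / (4 * (INR n - 1)) /\
  sqrt (x ^ 2 + 4 * (INR n - 1) * c * x) = u * x.
Proof.
  intro hx.
  assert (hcx : 0 < (INR n - 1) * c * x) by (apply Rmult_lt_0_compat; nra).
  set (s := sqrt (x ^ 2 + 4 * (INR n - 1) * c * x)).
  assert (hs2 : s * s = x ^ 2 + 4 * (INR n - 1) * c * x) by (apply sqrt_sqrt; nra).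
  assert (hs : 0 <= s) by apply sqrt_pos.
  assert (hxs : x < s) by nra.
  exists (s / x). split; [|split].
  - apply (Rmult_lt_reg_r x); [lra|]. unfold Rdiv. rewrite Rmult_assoc, Rinv_l; lra.
  - field_simplify_eq; [|lra]. replace (s ^ 2) with (s * s) by ring. rewrite hs2. field.
  - field. lra.
Qed.

Ltac eliminate_c x hx :=
  let u := fresh "u" in let hu := fresh "hu" in let Hs := fresh "Hs" in
  let hu2 := fresh "hu2" in
  destruct (sqrt_disc_param x hx) as [u [hu [-> Hs]]]; rewrite ?Hs;
  assert (hu2 : 0 < u ^ 2 - 1) by nra.

Lemma alpha_ode x : 0 < x ->
  (alpha n c x + INR n * c) * x * alpha1 n c x
  = 2 * c * x + alpha n c x ^ 2 - INR n * c * alpha n c x.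
Proof. intro hx. unfold alpha, alpha1. eliminate_c x hx. field. lra. Qed.

Lemma x_alpha1_lt_alpha x : 0 < x -> x * alpha1 n c x < alpha n c x.
Proof.
  intro hx. apply Rlt_0_minus. unfold alpha, alpha1. eliminate_c x hx.
  replace (_ - _) with
    (x * (u ^ 2 - 1) * (INR n * u - (INR n - 2)) / (4 * (INR n - 1) * u)) by (field; lra).
  apply Rdiv_lt_0_compat; [|nra]. apply Rmult_lt_0_compat; nra.
Qed.

Lemma alpha_lower x : 0 < x -> x / (INR n - 1) + 2 * c < alpha n c x.
Proof.
  intro hx. apply Rlt_0_minus. unfold alpha. eliminate_c x hx.
  replace (_ - _) with ((INR n - 2) * x * (u - 1) ^ 2 / (4 * (INR n - 1))) by (field; lra).
  apply Rdiv_lt_0_compat; [|lra]. apply Rmult_lt_0_compat; [nra|]. apply pow_lt. lra.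
Qed.

Lemma alpha_upper x : 0 < x -> alpha n c x < x / (INR n - 1) + INR n * c.
Proof.
  intro hx. apply Rlt_0_minus. unfold alpha. eliminate_c x hx.
  replace (_ - _) with ((INR n - 2) * x * (u - 1) / (2 * (INR n - 1))) by (field; lra).
  apply Rdiv_lt_0_compat; [apply Rmult_lt_0_compat|]; nra.
Qed.

Lemma alpha_vi_eq x : 0 < x ->
  (INR n - 2) / sqrt (INR n * (INR n - 1)) * sqrt (x * (alpha n c x - / INR n * x))
  + alpha n c x = 2 / INR n * x + INR n * c.
Proof.
  intro hx. set (q := sqrt (INR n * (INR n - 1))).
  assert (hq : 0 < q) by (apply sqrt_lt_R0; nra).
  assert (hq2 : q * q = INR n * (INR n - 1)) by (apply sqrt_sqrt; nra).
  unfold alpha. eliminate_c x hx.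
  replace (x * _) with ((x * (INR n * u - (INR n - 2)) / (2 * q)) ^ 2).
  2:{ replace ((x * (INR n * u - (INR n - 2)) / (2 * q)) ^ 2)
        with ((x * (INR n * u - (INR n - 2))) ^ 2 / (4 * (q * q))) by (field; lra).
      rewrite hq2. field. lra. }
  assert (hNu : 0 < INR n * u - (INR n - 2)) by nra.
  rewrite sqrt_pow2.
  2:{ apply Rmult_le_pos; [nra|]. apply Rlt_le, Rinv_0_lt_compat. lra. }
  replace ((INR n - 2) / q * (x * (INR n * u - (INR n - 2)) / (2 * q)))
    with ((INR n - 2) * (x * (INR n * u - (INR n - 2))) / (2 * (q * q))) by (field; lra).
  rewrite hq2. field. lra.
Qed.

Lemma alpha_at_0 : alpha n c 0 = INR n * c.
Proof. unfold alpha. replace (0 ^ 2 + _) with 0 by ring. rewrite sqrt_0. ring. Qed.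

Lemma alpha_le_vi_bound x : 0 <= x -> alpha n c x <= 2 / INR n * x + INR n * c.
Proof.
  intro hx. destruct (Req_dec x 0) as [->|hx0]; [rewrite alpha_at_0; lra|].
  assert (hxp : 0 < x) by lra.
  apply Rge_le, Rminus_ge, Rle_ge. unfold alpha. eliminate_c x hxp.
  replace (_ - _) with
    ((INR n - 2) * x * (INR n * u - (INR n - 2)) / (2 * INR n * (INR n - 1))) by (field; lra).
  apply Rmult_le_pos; [|apply Rlt_le, Rinv_0_lt_compat; nra]. apply Rmult_le_pos; nra.
Qed.

Lemma alpha_le_upper x : 0 <= x -> alpha n c x <= x / (INR n - 1) + INR n * c.
Proof.
  intro hx. destruct (Req_dec x 0) as [->|hx0]; [rewrite alpha_at_0; lra|].
  apply Rlt_le, alpha_upper. lra.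
Qed.

Lemma nc_add_x_alpha1_pos x : 0 < x -> 0 < INR n * c + x * alpha1 n c x.
Proof.
  intro hx. unfold alpha1. eliminate_c x hx.
  replace (_ + _) with
    (x * (u ^ 2 + 1) * (INR n * u - (INR n - 2)) / (4 * (INR n - 1) * u)) by (field; lra).
  apply Rdiv_lt_0_compat; [|nra]. apply Rmult_lt_0_compat; nra.
Qed.

Lemma x2_alpha2_lt_nc x : 0 < x -> x ^ 2 * alpha2 n c x < INR n * c.
Proof.
  intro hx. apply Rlt_0_minus. unfold alpha2. eliminate_c x hx.
  replace (_ - _) with (x * (u ^ 2 - 1) * (2 * INR n * u ^ 3 - (INR n - 2) * (u ^ 2 - 1))
                        / (8 * (INR n - 1) * u ^ 3)) by (field; lra).
  assert (hu3 : u ^ 2 - 1 < u ^ 3) by (simpl; nra).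
  apply Rdiv_lt_0_compat; [|apply Rmult_lt_0_compat; [lra|apply pow_lt; lra]].
  apply Rmult_lt_0_compat; [nra|]. nra.
Qed.

Lemma alpha1_lt_slope x : 0 < x -> alpha1 n c x < 1 / (INR n - 1).
Proof.
  intro hx. apply Rlt_0_minus. unfold alpha1. eliminate_c x hx.
  replace (_ - _) with ((INR n - 2) * (u - 1) ^ 2 / (4 * (INR n - 1) * u)) by (field; lra).
  apply Rdiv_lt_0_compat; [|nra]. apply Rmult_lt_0_compat; [lra|apply pow_lt; lra].
Qed.

Lemma alpha2_pos x : 0 < x -> 0 < alpha2 n c x.
Proof.
  intro hx. unfold alpha2. apply Rdiv_lt_0_compat; [|apply pow_lt, sqrt_lt_R0, disc_pos, hx].
  apply Rmult_lt_0_compat; [nra|]. apply pow_lt. lra.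
Qed.

Lemma alpha2_decreasing x y : 0 < x -> x < y -> alpha2 n c y < alpha2 n c x.
Proof.
  intros hx hxy. unfold alpha2.
  set (sx := sqrt (x ^ 2 + 4 * (INR n - 1) * c * x)).
  set (sy := sqrt (y ^ 2 + 4 * (INR n - 1) * c * y)).
  assert (hsx : 0 < sx) by (apply sqrt_lt_R0, disc_pos, hx).
  assert (hs : sx < sy) by (apply sqrt_lt_1; pose proof (disc_pos x hx); pose proof (disc_pos y ltac:(lra));
    [lra|lra|]; assert (0 < (INR n - 1) * c * (y - x)) by (apply Rmult_lt_0_compat; nra); nra).
  apply Rmult_lt_compat_l; [apply Rmult_lt_0_compat; [nra|apply pow_lt; lra]|].
  apply Rinv_lt_contravar; [apply Rmult_lt_0_compat; apply pow_lt; lra|].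
  assert (sx * sx < sy * sy) by nra. simpl. nra.
Qed.

Lemma alpha_i_cubic x u : 0 < x -> 1 < u -> x * (u ^ 2 - 1) = 4 * (INR n - 1) * c ->
  2 * x * alpha2 n c x + alpha1 n c x - 3 / (INR n + 2)
  = cubic_u (INR n) u / (4 * (INR n - 1) * (INR n + 2) * u ^ 3).
Proof.
  intros hx hu Hc. unfold alpha1, alpha2, cubic_u.
  rewrite (sqrt_disc_eq _ _ x u hx ltac:(lra) Hc).
  replace c with (x * (u ^ 2 - 1) / (4 * (INR n - 1))) by (rewrite Hc; field; lra).
  field. lra.
Qed.

Lemma alpha_derive x : 0 < x -> derivable_pt_lim (alpha n c) x (alpha1 n c x).
Proof.
  intro hx. apply is_derive_Reals. unfold alpha, alpha1.
  pose proof (disc_pos x hx) as hpos.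
  assert (hs := sqrt_lt_R0 _ hpos).
  auto_derive; [exact hpos|]. replace (x * (x * 1)) with (x ^ 2) by ring. field. lra.
Qed.

Lemma alpha1_derive x : 0 < x -> derivable_pt_lim (alpha1 n c) x (alpha2 n c x).
Proof.
  intro hx. apply is_derive_Reals. unfold alpha1, alpha2.
  pose proof (disc_pos x hx) as hpos.
  assert (hs := sqrt_lt_R0 _ hpos).
  auto_derive; replace (x * (x * 1)) with (x ^ 2) by ring; [repeat split; lra|].
  eliminate_c x hx. field. lra.
Qed.

Lemma alpha_continuous x : 0 <= x -> continuity_pt (alpha n c) x.
Proof.
  intro hx.
  set (Q := fun x => x ^ 2 + 4 * (INR n - 1) * c * x).
  assert (hQ : continuity_pt (fun x => sqrt (Q x)) x).
  { apply (continuity_pt_comp Q sqrt).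
    - apply derivable_continuous_pt. unfold Q. reg.
    - apply continuity_pt_sqrt. unfold Q.
      assert (0 <= (INR n - 1) * c * x) by (apply Rmult_le_pos; nra). nra. }
  set (P := fun x => INR n * c + INR n / (2 * (INR n - 1)) * x).
  assert (hP : continuity_pt P x) by (apply derivable_continuous_pt; unfold P; reg).
  change (continuity_pt (P - mult_real_fct ((INR n - 2) / (2 * (INR n - 1)))
                                          (fun x => sqrt (Q x)))%F x).
  apply continuity_pt_minus; [exact hP|]. apply continuity_pt_scal. exact hQ.
Qed.

Lemma alpha2_continuous x : 0 < x -> continuity_pt (alpha2 n c) x.
Proof.
  intro hx. pose proof (disc_pos x hx) as hpos.
  assert (hs := sqrt_lt_R0 _ hpos).
  enough (ex_derive (alpha2 n c) x) as [l Hl].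
  { apply derivable_continuous_pt. exists l. apply is_derive_Reals, Hl. }
  unfold alpha2. auto_derive. replace (x * (x * 1)) with (x ^ 2) by ring.
  repeat split; try lra. apply Rgt_not_eq. rewrite Rmult_1_r. repeat apply Rmult_lt_0_compat; lra.
Qed.

End Alpha.

Lemma cos_3a t : cos (3 * t) = 4 * cos t ^ 3 - 3 * cos t.
Proof.
  replace (3 * t) with (2 * t + t) by ring.
  rewrite cos_plus, sin_2a, cos_2a_cos.
  pose proof (sin2 t) as H. unfold Rsqr in H.
  replace (2 * sin t * cos t * sin t) with (2 * cos t * (sin t * sin t)) by ring.
  rewrite H. ring.
Qed.

(* y = y_n n is z - 4(n-1) for the root z of [resolvent (INR n)] given by Viete's
   trigonometric formula; u0 = sqrt(z / y) is then the root of [cubic_u (INR n)]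
   above 1, so that x0 is the point where (i) becomes an equality for alpha. *)
Definition resolvent (N z : R) : R :=
  (2 * N - 5) * z ^ 3 - 3 * (N ^ 2 - 4) ^ 2 * z - 4 * (N ^ 2 - 4) ^ 2 * (N - 1).

Lemma viete_root N sq C : 3 <= N -> 0 < sq -> sq * sq = 2 * N - 5 -> 1 / 2 < C ->
  4 * C ^ 3 - 3 * C = 2 * (N - 1) * sq / (N ^ 2 - 4) ->
  4 * (N - 1) < 2 * (N ^ 2 - 4) / sq * C /\ resolvent N (2 * (N ^ 2 - 4) / sq * C) = 0.
Proof.
  intros hN hsq hsq2 hC hcub. unfold resolvent.
  set (z := 2 * (N ^ 2 - 4) / sq * C).
  assert (hb : 0 < N ^ 2 - 4) by nra.
  assert (hroot : (2 * N - 5) * z ^ 3 - 3 * (N ^ 2 - 4) ^ 2 * z - 4 * (N ^ 2 - 4) ^ 2 * (N - 1) = 0).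
  { unfold z. replace ((2 * N - 5) * (2 * (N ^ 2 - 4) / sq * C) ^ 3)
      with (8 * (N ^ 2 - 4) ^ 3 / sq * C ^ 3) by (rewrite <- hsq2; field; lra).
    replace (C ^ 3) with ((3 * C + 2 * (N - 1) * sq / (N ^ 2 - 4)) / 4) by lra.
    field. lra. }
  split; [|exact hroot].
  (* r = (N^2 - 4) / sq < z is the critical point of the cubic, which is negative at 4(N-1) *)
  set (r := (N ^ 2 - 4) / sq).
  assert (hr : 0 < r) by (apply Rdiv_lt_0_compat; lra).
  assert (hzr : r < z) by (replace z with (2 * r * C) by (unfold z, r; field; lra); nra).
  assert (hr2 : (2 * N - 5) * (r * r) = (N ^ 2 - 4) ^ 2) by (unfold r; rewrite <- hsq2; field; lra).
  destruct (Rle_or_lt (4 * (N - 1)) r) as [h|h]; [lra|].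
  destruct (Rle_or_lt z (4 * (N - 1))) as [hz4|hz4]; [exfalso|lra].
  assert (hneg : (2 * N - 5) * (4 * (N - 1)) ^ 3 - 3 * (N ^ 2 - 4) ^ 2 * (4 * (N - 1))
                 - 4 * (N ^ 2 - 4) ^ 2 * (N - 1) < 0).
  { replace (_ - _) with (-16 * (N - 1) * (N ^ 2 - 4 * N + 6) ^ 2) by ring.
    assert (0 < (N ^ 2 - 4 * N + 6) ^ 2) by (apply pow_lt; nra). nra. }
  assert (hQ : 3 * (N ^ 2 - 4) ^ 2
               < (2 * N - 5) * (z * z + z * (4 * (N - 1)) + (4 * (N - 1)) * (4 * (N - 1)))).
  { rewrite <- hr2.
    assert (3 * (r * r) < z * z + z * (4 * (N - 1)) + (4 * (N - 1)) * (4 * (N - 1))) by nra.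
    nra. }
  assert (E : (2 * N - 5) * z ^ 3 - 3 * (N ^ 2 - 4) ^ 2 * z
              - ((2 * N - 5) * (4 * (N - 1)) ^ 3 - 3 * (N ^ 2 - 4) ^ 2 * (4 * (N - 1)))
     = (z - 4 * (N - 1)) * ((2 * N - 5) * (z * z + z * (4 * (N - 1))
                             + (4 * (N - 1)) * (4 * (N - 1))) - 3 * (N ^ 2 - 4) ^ 2)) by ring.
  nra.
Qed.

Lemma y_n_root n : 3 <= INR n ->
  0 < y_n n /\ resolvent (INR n) (y_n n + 4 * (INR n - 1)) = 0.
Proof.
  intro hN. set (N := INR n) in *.
  set (sq := sqrt (2 * N - 5)).
  assert (hsq : 0 < sq) by (apply sqrt_lt_R0; lra).
  assert (hsq2 : sq * sq = 2 * N - 5) by (apply sqrt_sqrt; lra).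
  set (v := (N ^ 2 - 4 * N + 6) / (2 * (N - 1) * sq)).
  assert (hv : 0 < v) by (apply Rdiv_lt_0_compat; nra).
  set (th := / 3 * atan v).
  assert (ha : 0 < atan v < PI / 2).
  { split; [rewrite <- atan_0; apply atan_increasing; lra|]. pose proof (atan_bound v); lra. }
  assert (hC : 1 / 2 < cos th).
  { rewrite <- cos_PI3. apply cos_decreasing_1; unfold th; pose proof PI_RGT_0; lra. }
  assert (hcub : 4 * cos th ^ 3 - 3 * cos th = 2 * (N - 1) * sq / (N ^ 2 - 4)).
  { rewrite <- cos_3a. replace (3 * th) with (atan v) by (unfold th; field).
    rewrite cos_atan.
    assert (E : 1 + v² = ((N ^ 2 - 4) / (2 * (N - 1) * sq))²).
    { unfold v, Rsqr. field_simplify_eq; [|split; lra].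
      replace (sq ^ 2) with (2 * N - 5) by (rewrite <- hsq2; ring).
      replace (sq ^ 4) with ((2 * N - 5) ^ 2) by (rewrite <- hsq2; ring). ring. }
    rewrite E, sqrt_Rsqr; [field; split; [nra|split; lra]|].
    apply Rlt_le, Rdiv_lt_0_compat; nra. }
  replace (y_n n + 4 * (N - 1)) with (2 * (N ^ 2 - 4) / sq * cos th)
    by (unfold y_n; fold N sq v th; ring).
  destruct (viete_root N sq (cos th) hN hsq hsq2 hC hcub) as [h1 h2].
  split; [|exact h2]. unfold y_n. fold N sq v th. lra.
Qed.

Lemma cubic_u_root N y : 3 <= N -> 0 < y -> resolvent N (y + 4 * (N - 1)) = 0 ->
  1 < sqrt ((y + 4 * (N - 1)) / y) /\ cubic_u N (sqrt ((y + 4 * (N - 1)) / y)) = 0.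
Proof.
  intros hN hy hres. unfold resolvent, cubic_u in *.
  set (z := y + 4 * (N - 1)) in *. set (w := z / y). set (u := sqrt w).
  assert (hw : 1 < w) by (unfold w, z; apply (Rmult_lt_reg_r y); [lra|]; field_simplify; lra).
  assert (hu2 : u * u = w) by (apply sqrt_sqrt; lra).
  assert (hu : 1 < u) by (unfold u; rewrite <- sqrt_1; apply sqrt_lt_1; lra).
  split; [exact hu|].
  (* cubic_u N u = 0 is U = V; both sides are positive and U^2 = V^2 is the resolvent *)
  set (U := 2 * (N ^ 2 - 4 * N + 6) * u ^ 3). set (V := (N ^ 2 - 4) * (3 * u ^ 2 - 1)).
  assert (hU : 0 < U) by (unfold U; apply Rmult_lt_0_compat; [nra|apply pow_lt; lra]).
  assert (hV : 0 < V) by (unfold V; apply Rmult_lt_0_compat; nra).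
  assert (UV : U * U = V * V).
  { unfold U, V. replace (u ^ 3) with (u * (u * u)) by ring. replace (u ^ 2) with (u * u) by ring.
    rewrite hu2. replace (2 * (N ^ 2 - 4 * N + 6) * (u * w) * (2 * (N ^ 2 - 4 * N + 6) * (u * w)))
      with ((2 * (N ^ 2 - 4 * N + 6)) ^ 2 * (u * u) * w * w) by ring.
    rewrite hu2. unfold w. apply (Rmult_eq_reg_r (y ^ 3)); [|apply pow_nonzero; lra].
    field_simplify; [|lra..].
    transitivity ((2 * (N ^ 2 - 4 * N + 6)) ^ 2 * z ^ 3 + 16 * (N - 1) ^ 2 * 0); [ring|].
    rewrite <- hres. unfold z. ring. }
  assert (U = V) by nra.
  unfold U, V in *. lra.
Qed.

Definition beta1 (n : nat) (c x : R) : R :=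
  alpha1 n c (x0 n c) + alpha2 n c (x0 n c) * (x - x0 n c).

Definition gamma1 (n : nat) (c x : R) : R :=
  if Rle_dec (x0 n c) x then alpha1 n c x else beta1 n c x.

Definition gamma2 (n : nat) (c x : R) : R :=
  if Rle_dec (x0 n c) x then alpha2 n c x else alpha2 n c (x0 n c).

Section Gamma.

Variables (n : nat) (c : R).
Hypotheses (hN : 3 <= INR n) (hc : 0 < c).

Lemma x0_pos : 0 < x0 n c.
Proof. unfold x0. destruct (y_n_root n hN) as [hy _]. nra. Qed.

Lemma x0_param : exists u0, 1 < u0 /\
  x0 n c * (u0 ^ 2 - 1) = 4 * (INR n - 1) * c /\ cubic_u (INR n) u0 = 0.
Proof.
  destruct (y_n_root n hN) as [hy hres].
  destruct (cubic_u_root (INR n) (y_n n) hN hy hres) as [hu0 hr].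
  set (u0 := sqrt ((y_n n + 4 * (INR n - 1)) / y_n n)) in *.
  exists u0. split; [exact hu0|split; [|exact hr]].
  unfold u0. rewrite pow2_sqrt; [|apply Rlt_le, Rdiv_lt_0_compat; lra].
  unfold x0. field. lra.
Qed.

Lemma alpha_i_at_x0 :
  2 * x0 n c * alpha2 n c (x0 n c) + alpha1 n c (x0 n c) = 3 / (INR n + 2).
Proof.
  destruct x0_param as [u0 [hu0 [Hx0 Hr]]].
  pose proof (alpha_i_cubic n c hN (x0 n c) u0 x0_pos hu0 Hx0) as E.
  rewrite Hr in E. unfold Rdiv at 2 in E. lra.
Qed.

Lemma alpha_i_region x : x0 n c <= x ->
  2 * x * alpha2 n c x + alpha1 n c x <= 3 / (INR n + 2) /\
  (2 * x * alpha2 n c x + alpha1 n c x = 3 / (INR n + 2) <-> x = x0 n c).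
Proof.
  intro hx. pose proof x0_pos as ha.
  destruct x0_param as [u0 [hu0 [Hx0 Hr]]].
  destruct (sqrt_disc_param n c hN hc x ltac:(lra)) as [u [hu [Hc _]]].
  assert (Hx : x * (u ^ 2 - 1) = 4 * (INR n - 1) * c) by (rewrite Hc; field; lra).
  assert (huu0 : u <= u0).
  { destruct (Rle_or_lt u u0) as [|h]; [assumption|exfalso].
    assert (u0 ^ 2 < u ^ 2) by nra. assert (0 < u0 ^ 2 - 1) by nra. nra. }
  destruct (cubic_u_nonpos (INR n) u u0 hN hu huu0 Hr) as [hneg heq].
  pose proof (alpha_i_cubic n c hN x u ltac:(lra) hu Hx) as E.
  assert (hD : 0 < 4 * (INR n - 1) * (INR n + 2) * u ^ 3)
    by (apply Rmult_lt_0_compat; [nra|apply pow_lt; lra]).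
  assert (hq : cubic_u (INR n) u / (4 * (INR n - 1) * (INR n + 2) * u ^ 3) <= 0)
    by (apply Rmult_le_0_r; [exact hneg|apply Rlt_le, Rinv_0_lt_compat, hD]).
  split; [lra|split; intro h].
  - rewrite h, Rminus_diag in E.
    assert (cubic_u (INR n) u = 0).
    { destruct (Rmult_integral _ _ (eq_sym E)) as [|hinv]; [assumption|].
      exfalso. exact (Rinv_neq_0_compat _ (Rgt_not_eq _ _ hD) hinv). }
    assert (u = u0) by auto. subst u.
    apply (Rmult_eq_reg_r (u0 ^ 2 - 1)); nra.
  - subst x. assert (u ^ 2 = u0 ^ 2) by (apply (Rmult_eq_reg_l (x0 n c)); lra).
    assert (u = u0) by nra. subst u. rewrite Hr in E. unfold Rdiv at 1 in E. lra.
Qed.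

Lemma beta_derive x : derivable_pt_lim (beta n c) x (beta1 n c x).
Proof. apply is_derive_Reals. unfold beta, beta1. auto_derive; [exact I|]. field. Qed.

Lemma beta1_derive x : derivable_pt_lim (beta1 n c) x (alpha2 n c (x0 n c)).
Proof. apply is_derive_Reals. unfold beta1. auto_derive; [exact I|]. ring. Qed.

Lemma beta_at_x0 : beta n c (x0 n c) = alpha n c (x0 n c).
Proof. unfold beta. rewrite Rminus_diag. ring. Qed.

Lemma beta1_at_x0 : beta1 n c (x0 n c) = alpha1 n c (x0 n c).
Proof. unfold beta1. rewrite Rminus_diag. ring. Qed.

(* alpha1 - beta1 vanishes at x0 and its derivative alpha2 - alpha2(x0) has the
   sign of x0 - x, since alpha2 is decreasing. *)
Lemma alpha1_lt_beta1 x : 0 < x -> x <> x0 n c -> alpha1 n c x < beta1 n c x.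
Proof.
  intros hx hxa. pose proof x0_pos as ha.
  set (D := fun t => alpha1 n c t - beta1 n c t).
  assert (hD : forall t, 0 < t -> derivable_pt_lim D t (alpha2 n c t - alpha2 n c (x0 n c))).
  { intros t ht. apply derivable_pt_lim_minus; [apply alpha1_derive; auto|apply beta1_derive]. }
  assert (hDa : D (x0 n c) = 0) by (unfold D; rewrite beta1_at_x0; ring).
  enough (D x < 0) by (unfold D in *; lra).
  destruct (Rlt_or_le x (x0 n c)) as [h|h].
  - destruct (MVT_cor2 D _ x (x0 n c) h (fun t ht => hD t ltac:(lra))) as [t [E ht]].
    pose proof (alpha2_decreasing n c hN hc t (x0 n c) ltac:(lra) ltac:(lra)). nra.
  - destruct (MVT_cor2 D _ (x0 n c) x ltac:(lra) (fun t ht => hD t ltac:(lra))) as [t [E ht]].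
    pose proof (alpha2_decreasing n c hN hc (x0 n c) t ha ltac:(lra)). nra.
Qed.

Lemma alpha_beta_sign x : 0 <= x ->
  (x < x0 n c -> beta n c x < alpha n c x) /\ (x0 n c < x -> alpha n c x < beta n c x).
Proof.
  intro hx. pose proof x0_pos as ha.
  set (D := fun t => alpha n c t - beta n c t).
  assert (hD : forall t, 0 < t -> derivable_pt_lim D t (alpha1 n c t - beta1 n c t)).
  { intros t ht. apply derivable_pt_lim_minus; [apply alpha_derive; auto|apply beta_derive]. }
  assert (hDc : forall t, 0 <= t -> continuity_pt D t).
  { intros t ht. apply continuity_pt_minus; [apply alpha_continuous; auto|].
    apply derivable_continuous_pt. exists (beta1 n c t). apply beta_derive. }
  assert (hDa : D (x0 n c) = 0) by (unfold D; rewrite beta_at_x0; ring).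
  split; intro h.
  - destruct (MVT_strict D _ x (x0 n c) h (fun t ht => hD t ltac:(lra))
      (fun t ht => hDc t ltac:(lra))) as [t [ht E]].
    pose proof (alpha1_lt_beta1 t ltac:(lra) ltac:(lra)). unfold D in *. nra.
  - destruct (MVT_strict D _ (x0 n c) x h (fun t ht => hD t ltac:(lra))
      (fun t ht => hDc t ltac:(lra))) as [t [ht E]].
    pose proof (alpha1_lt_beta1 t ltac:(lra) ltac:(lra)). unfold D in *. nra.
Qed.

Lemma gamma_derive : has_deriv_nonneg (gamma n c) (gamma1 n c).
Proof.
  pose proof x0_pos.
  apply glue_has_deriv; [apply beta_at_x0|apply beta1_at_x0|intros; apply beta_derive|].
  intros x hx. apply alpha_derive; auto; lra.
Qed.

Lemma gamma1_derive : has_deriv_nonneg (gamma1 n c) (gamma2 n c).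
Proof.
  pose proof x0_pos.
  apply glue_has_deriv; [apply beta1_at_x0|reflexivity|intros; apply beta1_derive|].
  intros x hx. apply alpha1_derive; auto; lra.
Qed.

Lemma gamma2_continuous : cont_nonneg (gamma2 n c).
Proof.
  pose proof x0_pos.
  apply glue_continuous; [reflexivity|intros; apply continuity_pt_const; now intros ? ?|].
  intros x hx. apply alpha2_continuous; auto; lra.
Qed.

Lemma beta_lower x : x < x0 n c -> x / (INR n - 1) + 2 * c < beta n c x.
Proof.
  intro hx. pose proof x0_pos as ha.
  pose proof (alpha_lower n c hN hc (x0 n c) ha).
  pose proof (alpha1_lt_slope n c hN hc (x0 n c) ha).
  pose proof (alpha2_pos n c hN hc (x0 n c) ha).
  apply Rlt_0_minus. unfold beta. set (a := x0 n c) in *.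
  replace (_ - _) with ((alpha n c a - (a / (INR n - 1) + 2 * c))
    + (alpha1 n c a - 1 / (INR n - 1)) * (x - a)
    + alpha2 n c a * (x - a) ^ 2 / 2) by (field; lra).
  assert (0 < (alpha1 n c a - 1 / (INR n - 1)) * (x - a)) by nra.
  assert (0 <= alpha2 n c a * (x - a) ^ 2 / 2) by (pose proof (pow2_ge_0 (x - a)); nra).
  lra.
Qed.

Lemma x_beta1_lt_beta x : 0 <= x < x0 n c -> x * beta1 n c x < beta n c x.
Proof.
  intro hx. pose proof x0_pos as ha.
  pose proof (x_alpha1_lt_alpha n c hN hc (x0 n c) ha).
  pose proof (alpha2_pos n c hN hc (x0 n c) ha).
  apply Rlt_0_minus. unfold beta, beta1. set (a := x0 n c) in *.
  replace (_ - _) with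
    ((alpha n c a - a * alpha1 n c a) + alpha2 n c a * (a ^ 2 - x ^ 2) / 2) by field.
  assert (0 < a ^ 2 - x ^ 2) by nra.
  assert (0 < alpha2 n c a * (a ^ 2 - x ^ 2) / 2)
    by (apply Rmult_lt_0_compat; [apply Rmult_lt_0_compat|]; lra).
  lra.
Qed.

Lemma beta_ii_defect x :
  (beta n c x + INR n * c) * x * beta1 n c x
  - (2 * c * x + beta n c x ^ 2 - INR n * c * beta n c x)
  = 3 * alpha2 n c (x0 n c) * (x - x0 n c) ^ 2 *
    ((INR n * c + x0 n c * alpha1 n c (x0 n c)) / 2
     + (alpha1 n c (x0 n c) + x0 n c * alpha2 n c (x0 n c)) * (x - x0 n c) / 6
     + alpha2 n c (x0 n c) * (x - x0 n c) ^ 2 / 12).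
Proof.
  unfold beta, beta1. generalize x0_pos. generalize (x0 n c) as a. intros a ha.
  unfold alpha, alpha1, alpha2.
  destruct (sqrt_disc_param n c hN hc a ha) as [u [hu [-> ->]]]. field. lra.
Qed.

Lemma beta_vi_defect x :
  (2 / INR n * x + INR n * c - beta n c x) ^ 2
  - (INR n - 2) ^ 2 / (INR n * (INR n - 1)) * (x * (beta n c x - / INR n * x))
  = (x - x0 n c) ^ 3 *
    (alpha2 n c (x0 n c) ^ 2 / 4 * (x - x0 n c)
     - (2 * (2 / INR n * x0 n c + INR n * c - alpha n c (x0 n c))
        + (INR n - 2) ^ 2 / (INR n * (INR n - 1)) * x0 n c)
       * alpha2 n c (x0 n c) * (x0 n c + 2 * (INR n - 1) * c)
       / (2 * (x0 n c ^ 2 + 4 * (INR n - 1) * c * x0 n c))).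
Proof.
  unfold beta. generalize x0_pos. generalize (x0 n c) as a. intros a ha.
  unfold alpha, alpha1, alpha2.
  destruct (sqrt_disc_param n c hN hc a ha) as [u [hu [-> ->]]]. field.
  assert (0 < u ^ 2 - 1) by nra.
  assert (0 < a * (u ^ 2 - 1) * a) by (apply Rmult_lt_0_compat; [apply Rmult_lt_0_compat|]; lra).
  assert (0 < a ^ 2) by nra. repeat split; lra.
Qed.

Lemma gamma_i x :
  2 * x * gamma2 n c x + gamma1 n c x <= 3 / (INR n + 2) /\
  (2 * x * gamma2 n c x + gamma1 n c x = 3 / (INR n + 2) <-> x = x0 n c).
Proof.
  unfold gamma1, gamma2. destruct (Rle_dec (x0 n c) x) as [h|h]; [exact (alpha_i_region x h)|].
  pose proof alpha_i_at_x0. pose proof (alpha2_pos n c hN hc (x0 n c) x0_pos).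
  unfold beta1. split; [nra|split; intro; nra].
Qed.

Lemma gamma_ii x : 0 <= x ->
  (gamma n c x + INR n * c) * x * gamma1 n c x
    >= 2 * c * x + gamma n c x ^ 2 - INR n * c * gamma n c x /\
  ((gamma n c x + INR n * c) * x * gamma1 n c x
     = 2 * c * x + gamma n c x ^ 2 - INR n * c * gamma n c x <-> x >= x0 n c).
Proof.
  intro hx. pose proof x0_pos as ha. unfold gamma, gamma1.
  destruct (Rle_dec (x0 n c) x) as [h|h].
  { rewrite (alpha_ode n c hN hc x ltac:(lra)). split; [lra|split; intro; lra]. }
  enough (0 < (beta n c x + INR n * c) * x * beta1 n c x
              - (2 * c * x + beta n c x ^ 2 - INR n * c * beta n c x))
    by (split; [lra|split; intro; lra]).
  rewrite beta_ii_defect.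
  pose proof (nc_add_x_alpha1_pos n c hN hc (x0 n c) ha).
  pose proof (x2_alpha2_lt_nc n c hN hc (x0 n c) ha).
  pose proof (alpha2_pos n c hN hc (x0 n c) ha).
  set (a := x0 n c) in *.
  set (b1 := alpha1 n c a) in *. set (b2 := alpha2 n c a) in *.
  apply Rmult_lt_0_compat; [apply Rmult_lt_0_compat; [lra|nra]|].
  (* on [-a, 0] the linear term is bounded below by its value at one end *)
  assert (0 <= b2 * (x - a) ^ 2) by (apply Rmult_le_pos; [lra|apply pow2_ge_0]).
  destruct (Rle_or_lt 0 (b1 + a * b2)).
  - assert (-(b1 + a * b2) * a <= (b1 + a * b2) * (x - a)) by nra. nra.
  - assert (0 <= (b1 + a * b2) * (x - a)) by nra. nra.
Qed.

Lemma gamma_iii x : 0 <= x -> gamma n c x > x * gamma1 n c x.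
Proof.
  intro hx. pose proof x0_pos. unfold gamma, gamma1.
  destruct (Rle_dec (x0 n c) x).
  - apply x_alpha1_lt_alpha; auto. lra.
  - apply x_beta1_lt_beta. lra.
Qed.

Lemma gamma_iv x : 0 <= x -> gamma n c x = Rmin (alpha n c x) (beta n c x).
Proof.
  intro hx. destruct (alpha_beta_sign x hx) as [hlt hgt]. unfold gamma.
  destruct (Rle_dec (x0 n c) x) as [h|h].
  - rewrite Rmin_left; [reflexivity|].
    destruct (Req_dec x (x0 n c)) as [->|hne]; [rewrite beta_at_x0; lra|].
    apply Rlt_le, hgt. lra.
  - rewrite Rmin_right; [reflexivity|]. apply Rlt_le, hlt. lra.
Qed.

Lemma gamma_v x : 0 <= x ->
  x / (INR n - 1) + 2 * c < gamma n c x /\ gamma n c x < x / (INR n - 1) + INR n * c.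
Proof.
  intro hx. pose proof x0_pos. unfold gamma.
  destruct (Rle_dec (x0 n c) x).
  - split; [apply alpha_lower|apply alpha_upper]; auto; lra.
  - destruct (alpha_beta_sign x hx) as [hlt _].
    pose proof (alpha_le_upper n c hN hc x hx).
    split; [apply beta_lower|]; lra.
Qed.

Lemma gamma_vi x : 0 <= x ->
  (INR n - 2) / sqrt (INR n * (INR n - 1)) * sqrt (x * (gamma n c x - / INR n * x))
  + gamma n c x <= 2 / INR n * x + INR n * c.
Proof.
  intro hx. pose proof x0_pos as ha.
  assert (hv := gamma_v x hx). unfold gamma in *.
  destruct (Rle_dec (x0 n c) x) as [h|h]; [rewrite alpha_vi_eq; lra|].
  destruct (alpha_beta_sign x hx) as [hlt _]. specialize (hlt ltac:(lra)).
  pose proof (alpha_le_vi_bound n c hN hc x hx).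
  enough ((INR n - 2) / sqrt (INR n * (INR n - 1)) * sqrt (x * (beta n c x - / INR n * x))
          < 2 / INR n * x + INR n * c - beta n c x) by lra.
  assert (/ INR n * x <= x / (INR n - 1)).
  { unfold Rdiv. rewrite Rmult_comm. apply Rmult_le_compat_l; [lra|].
    apply Rinv_le_contravar; lra. }
  apply div_sqrt_mul_sqrt_lt; [lra|nra|apply Rmult_le_pos; lra|lra|].
  apply Rlt_0_minus. rewrite beta_vi_defect.
  pose proof (alpha_le_vi_bound n c hN hc (x0 n c) (Rlt_le _ _ ha)).
  pose proof (alpha2_pos n c hN hc (x0 n c) ha).
  pose proof (disc_pos n c hN hc (x0 n c) ha).
  set (a := x0 n c) in *. set (b2 := alpha2 n c a) in *.
  assert (hM : 0 < (INR n - 2) ^ 2 / (INR n * (INR n - 1)) * a)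
    by (apply Rmult_lt_0_compat; [apply Rdiv_lt_0_compat; [apply pow_lt|]|]; nra).
  assert (0 < (2 * (2 / INR n * a + INR n * c - alpha n c a)
               + (INR n - 2) ^ 2 / (INR n * (INR n - 1)) * a) * b2
              * (a + 2 * (INR n - 1) * c) / (2 * (a ^ 2 + 4 * (INR n - 1) * c * a))).
  { apply Rdiv_lt_0_compat; [|lra].
    apply Rmult_lt_0_compat; [apply Rmult_lt_0_compat; lra|nra]. }
  assert ((x - a) ^ 3 < 0) by (assert (0 < (a - x) ^ 3) by (apply pow_lt; lra); nra).
  assert (0 <= b2 ^ 2 / 4 * (a - x)) by (assert (0 <= b2 ^ 2) by apply pow2_ge_0; nra).
  nra.
Qed.

End Gamma.

Theorem mainTheorem8 (n : nat) (c : R) (hn : (3 <= n)%nat) (hc : 0 < c) :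
  exists g1 g2 : R -> R,
    has_deriv_nonneg (gamma n c) g1 /\
    has_deriv_nonneg g1 g2 /\
    cont_nonneg g2 /\
    forall x, 0 <= x ->
      (* (i) *)
      (2 * x * g2 x + g1 x <= 3 / (INR n + 2) /\
       (2 * x * g2 x + g1 x = 3 / (INR n + 2) <-> x = x0 n c)) /\
      (* (ii) *)
      ((gamma n c x + INR n * c) * x * g1 x
         >= 2 * c * x + gamma n c x ^ 2 - INR n * c * gamma n c x /\
       ((gamma n c x + INR n * c) * x * g1 x
          = 2 * c * x + gamma n c x ^ 2 - INR n * c * gamma n c x
        <-> x >= x0 n c)) /\
      (* (iii) *)
      gamma n c x > x * g1 x /\
      (* (iv) *)
      gamma n c x = Rmin (alpha n c x) (beta n c x) /\
      (* (v) *)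
      (x / (INR n - 1) + 2 * c < gamma n c x /\
       gamma n c x < x / (INR n - 1) + INR n * c) /\
      (* (vi) *)
      (INR n - 2) / sqrt (INR n * (INR n - 1))
        * sqrt (x * (gamma n c x - / INR n * x)) + gamma n c x
        <= 2 / INR n * x + INR n * c.
Proof.
  pose proof (le3_INR n hn) as hN.
  exists (gamma1 n c), (gamma2 n c).
  split; [exact (gamma_derive n c hN hc)|].
  split; [exact (gamma1_derive n c hN hc)|].
  split; [exact (gamma2_continuous n c hN hc)|].
  intros x hx.
  split; [exact (gamma_i n c hN hc x)|].
  split; [exact (gamma_ii n c hN hc x hx)|].
  split; [exact (gamma_iii n c hN hc x hx)|].
  split; [exact (gamma_iv n c hN hc x hx)|].
  split; [exact (gamma_v n c hN hc x hx)|].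
  exact (gamma_vi n c hN hc x hx).
Qed.
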